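(* Let $\Gamma\subseteq\mathit{Aff}(2,\mathbb{H})$ be a subgroup acting freely on $\mathbb{H}^2$. Then $\Gamma$ is conjugate in $\mathit{Aff}(2,\mathbb{H})$ to a subgroup of $G_1$ or of $G_2$.
   Context: $\mathit{Aff}(2,\mathbb{H})$ is identified with invertible $3\times3$ quaternionic matrices $\begin{pmatrix} a&b&r\\ c&d&s\\ 0&0&1\end{pmatrix}$ acting on $(x,y)\in\mathbb{H}^2$ by $(x,y)\mapsto(ax+by+r,cx+dy+s)$. $G_1=\left\{\begin{pmatrix} a&b&r\\ 0&1&s\\ 0&0&1\end{pmatrix}: a,b,r,s\in\mathbb{H}, a\neq0\right\}$ and $G_2=\left\{\begin{pmatrix} 1&b&r\\ 0&d&s\\ 0&0&1\end{pmatrix}: b,r,s,d\in\mathbb{H}, d\neq0\right\}$. *)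

From mathcomp Require Import all_boot all_order all_algebra.
From mathcomp Require Import reals.
Set Implicit Arguments. Unset Strict Implicit. Unset Printing Implicit Defensive.
Import GRing.Theory Num.Theory.
Local Open Scope ring_scope.

Section Quat.
Variable R : realType.

Record quat := Quat { qr : R; qi : R; qj : R; qk : R }.

Definition qzero : quat := Quat 0 0 0 0.
Definition qone : quat := Quat 1 0 0 0.
Definition qadd (p q : quat) : quat :=
  Quat (qr p + qr q) (qi p + qi q) (qj p + qj q) (qk p + qk q).
Definition qmul (p q : quat) : quat :=
  Quat (qr p * qr q - qi p * qi q - qj p * qj q - qk p * qk q)
       (qr p * qi q + qi p * qr q + qj p * qk q - qk p * qj q)
       (qr p * qj q - qi p * qk q + qj p * qr q + qk p * qi q)
       (qr p * qk q + qi p * qj q - qj p * qi q + qk p * qr q).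

(* A quaternionic 3x3 matrix [[a,b,r],[c,d,s],[0,0,1]], acting on H^2 by
   (x,y) |-> (a x + b y + r, c x + d y + s). *)
Record aff := Aff { aa : quat; ab : quat; ac : quat; ad : quat;
                    ar : quat; as_ : quat }.

Definition aff_id : aff := Aff qone qzero qzero qone qzero qzero.

Definition aff_mul (g h : aff) : aff :=
  Aff (qadd (qmul (aa g) (aa h)) (qmul (ab g) (ac h)))
      (qadd (qmul (aa g) (ab h)) (qmul (ab g) (ad h)))
      (qadd (qmul (ac g) (aa h)) (qmul (ad g) (ac h)))
      (qadd (qmul (ac g) (ab h)) (qmul (ad g) (ad h)))
      (qadd (qadd (qmul (aa g) (ar h)) (qmul (ab g) (as_ h))) (ar g))
      (qadd (qadd (qmul (ac g) (ar h)) (qmul (ad g) (as_ h))) (as_ g)).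

Definition aff_act (g : aff) (p : quat * quat) : quat * quat :=
  (qadd (qadd (qmul (aa g) p.1) (qmul (ab g) p.2)) (ar g),
   qadd (qadd (qmul (ac g) p.1) (qmul (ad g) p.2)) (as_ g)).

Definition aff_inverse (g h : aff) : Prop :=
  aff_mul g h = aff_id /\ aff_mul h g = aff_id.

Definition in_Aff (g : aff) : Prop := exists h, aff_inverse g h.

Definition is_subgroup (Gamma : aff -> Prop) : Prop :=
  Gamma aff_id /\
  (forall g h, Gamma g -> Gamma h -> Gamma (aff_mul g h)) /\
  (forall g, Gamma g -> exists h, Gamma h /\ aff_inverse g h).

Definition acts_freely (Gamma : aff -> Prop) : Prop :=
  forall g p, Gamma g -> aff_act g p = p -> g = aff_id.

Definition in_G1 (g : aff) : Prop :=
  aa g <> qzero /\ ac g = qzero /\ ad g = qone.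
Definition in_G2 (g : aff) : Prop :=
  aa g = qone /\ ac g = qzero /\ ad g <> qzero.

End Quat.

(* Let A be the linear part of some g in Gamma. If 1 is not an eigenvalue of A,
   then A - 1 is invertible and g has a fixed point, so freeness gives every
   element of Gamma a nonzero fixed vector. If all linear parts are trivial,
   Gamma fixes e1. Otherwise take g0 with linear part A0 <> 1: over the division
   ring H, A0 - 1 has rank one, so A0 fixes exactly a line vH and fixes a
   nonzero row vector w (one annihilating the image of A0 - 1). For g in Gamma,
   the fact that both g and g0 g have fixed vectors forces g v = v or w g = w;
   as a group is not the union of two proper subgroups, all of Gamma fixes v or
   all of Gamma fixes w. Conjugating v to e1, resp. w to e2, lands in G2,
   resp. G1. *)

From HB Require Import structures.
From mathcomp Require Import all_boot all_order all_algebra.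
From mathcomp Require Import reals ring.
From Stdlib Require Import Classical.
Set Implicit Arguments. Unset Strict Implicit. Unset Printing Implicit Defensive.
Import GRing.Theory Num.Theory.
Local Open Scope ring_scope.

Section QuaternionRing.
Variable R : realType.
Local Notation Q := (quat R).

Definition quat_tuple (q : Q) := (qr q, qi q, qj q, qk q).
Definition tuple_quat (t : R * R * R * R) := Quat t.1.1.1 t.1.1.2 t.1.2 t.2.
Lemma quat_tupleK : cancel quat_tuple tuple_quat. Proof. by case. Qed.
HB.instance Definition _ := Choice.copy Q (can_type quat_tupleK).

Definition qopp (q : Q) := Quat (- qr q) (- qi q) (- qj q) (- qk q).

Lemma quat_ext (p q : Q) :
  qr p = qr q -> qi p = qi q -> qj p = qj q -> qk p = qk q -> p = q.
Proof. by case: p; case: q => /= *; subst. Qed.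

Local Ltac quat_ring :=
  repeat match goal with q : Q |- _ => case: q => ? ? ? ? end;
  apply: quat_ext; rewrite /=; ring.

Lemma qaddA : associative (@qadd R). Proof. move=> *; quat_ring. Qed.
Lemma qaddC : commutative (@qadd R). Proof. move=> *; quat_ring. Qed.
Lemma qadd0 : left_id (qzero R) (@qadd R). Proof. move=> *; quat_ring. Qed.
Lemma qaddN : left_inverse (qzero R) qopp (@qadd R). Proof. move=> *; quat_ring. Qed.
Lemma qmulA : associative (@qmul R). Proof. move=> *; quat_ring. Qed.
Lemma qmul1 : left_id (qone R) (@qmul R). Proof. move=> *; quat_ring. Qed.
Lemma qmulr1 : right_id (qone R) (@qmul R). Proof. move=> *; quat_ring. Qed.
Lemma qmulDl : left_distributive (@qmul R) (@qadd R). Proof. move=> *; quat_ring. Qed.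
Lemma qmulDr : right_distributive (@qmul R) (@qadd R). Proof. move=> *; quat_ring. Qed.
Lemma qone_neq0 : qone R != qzero R.
Proof. by apply/eqP => /(congr1 (@qr R)) /= /eqP; rewrite oner_eq0. Qed.

HB.instance Definition _ := GRing.isNzRing.Build Q
  qaddA qaddC qadd0 qaddN qmulA qmul1 qmulr1 qmulDl qmulDr qone_neq0.

Definition qnorm2 (q : Q) := qr q ^+ 2 + qi q ^+ 2 + qj q ^+ 2 + qk q ^+ 2.
Definition qinv (q : Q) :=
  Quat (qr q / qnorm2 q) (- qi q / qnorm2 q) (- qj q / qnorm2 q) (- qk q / qnorm2 q).

Lemma qnorm2_eq0 (q : Q) : (qnorm2 q == 0) = (q == 0).
Proof.
apply/eqP/eqP => [|->]; last by rewrite /qnorm2 /= expr0n /= !addr0.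
case: q => a b c d; rewrite /qnorm2 /= => n0.
move/eqP: n0; rewrite !paddr_eq0 ?addr_ge0 ?sqr_ge0 // !sqrf_eq0.
by case/andP => /andP [/andP [/eqP-> /eqP->] /eqP->] /eqP->.
Qed.

Definition qunit := [pred q : Q | q != 0].

Lemma qmulVr : {in qunit, left_inverse 1 qinv *%R}.
Proof.
move=> q; rewrite inE -qnorm2_eq0 => n0; change (qmul (qinv q) q = qone R).
move: n0; case: q => a b c d; rewrite /qnorm2 /= => n0.
by apply: quat_ext; rewrite /= /qnorm2 /=; field.
Qed.

Lemma qmulrV : {in qunit, right_inverse 1 qinv *%R}.
Proof.
move=> q; rewrite inE -qnorm2_eq0 => n0; change (qmul q (qinv q) = qone R).
move: n0; case: q => a b c d; rewrite /qnorm2 /= => n0.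
by apply: quat_ext; rewrite /= /qnorm2 /=; field.
Qed.

Lemma qunitP (p q : Q) : q * p = 1 /\ p * q = 1 -> qunit p.
Proof.
case=> _ pq1; rewrite inE; apply/eqP => p0; move: pq1.
by rewrite p0 mul0r => /esym/eqP; rewrite oner_eq0.
Qed.

Lemma qinv_out : {in [predC qunit], qinv =1 id}.
Proof. by move=> q; rewrite !inE negbK => /eqP->; apply: quat_ext; rewrite /= !(oppr0, mul0r). Qed.

HB.instance Definition _ := GRing.NzRing_hasMulInverse.Build Q
  qmulVr qmulrV qunitP qinv_out.

Lemma qunitE (q : Q) : (q \is a GRing.unit) = (q != 0). Proof. by []. Qed.
Lemma qzeroE : qzero R = 0. Proof. by []. Qed.
Lemma qoneE : qone R = 1. Proof. by []. Qed.

End QuaternionRing.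

(* A group is not the union of two proper subgroups, stated for stabilizer-like predicates. *)
Lemma stabilizer_cover (T : Type) (mul : T -> T -> T) (G P Q : T -> Prop) :
  (forall x y, G x -> G y -> G (mul x y)) ->
  (forall x y, P y -> P (mul x y) -> P x) ->
  (forall x y, Q x -> Q (mul x y) -> Q y) ->
  (forall x, G x -> P x \/ Q x) ->
  (forall x, G x -> P x) \/ (forall x, G x -> Q x).
Proof.
move=> Gmul Pl Qr PQ.
have [[x [Gx nPx]]|nP] := classic (exists x, G x /\ ~ P x); last first.
  by left=> x Gx; apply: NNPP => nPx; apply: nP; exists x.
right=> y Gy; have Qx : Q x by case: (PQ x Gx).
case: (PQ y Gy) => // Py.
by case: (PQ _ (Gmul x y Gx Gy)) => [/(Pl _ _ Py)/nPx[]|/(Qr _ _ Qx)].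
Qed.

Section QuaternionPlane.
Variable R : realType.
Local Notation Q := (quat R).
Local Notation V := (Q * Q)%type.
Implicit Types (g h : aff R) (k u v w x y z : V).

(* H^2 is a right H-vector space (scalars act through [rscale]); [lin g] and
   [colin _ g] are the linear part of [g] acting on columns and on rows. *)
Definition lin g u : V := (aa g * u.1 + ab g * u.2, ac g * u.1 + ad g * u.2).
Definition colin w g : V := (w.1 * aa g + w.2 * ac g, w.1 * ab g + w.2 * ad g).
Definition vdot w u : Q := w.1 * u.1 + w.2 * u.2.
Definition rscale u (l : Q) : V := (u.1 * l, u.2 * l).

Lemma pairD (a b c d : Q) : (a, b) + (c, d) = (a + c, b + d) :> V. Proof. by []. Qed.
Lemma pair0 : 0 = (0, 0) :> V. Proof. by []. Qed.

Lemma one_pair_neq0 (a : Q) : (1, a) != 0 :> V.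
Proof. by rewrite pair0 xpair_eqE oner_eq0. Qed.

Lemma pair_one_neq0 (a : Q) : (a, 1) != 0 :> V.
Proof. by rewrite pair0 xpair_eqE oner_eq0 andbF. Qed.

Lemma aff_mulE g h : aff_mul g h =
  Aff (aa g * aa h + ab g * ac h) (aa g * ab h + ab g * ad h)
      (ac g * aa h + ad g * ac h) (ac g * ab h + ad g * ad h)
      (aa g * ar h + ab g * as_ h + ar g) (ac g * ar h + ad g * as_ h + as_ g).
Proof. by []. Qed.

Lemma aff_idE : aff_id R = Aff 1 0 0 1 0 0. Proof. by []. Qed.

Lemma aff_actE g u : aff_act g u = lin g u + (ar g, as_ g). Proof. by []. Qed.

Lemma lin_mul g h u : lin (aff_mul g h) u = lin g (lin h u).
Proof. by rewrite /lin /=; congr pair; rewrite !mulrDl !mulrDr !mulrA addrACA. Qed.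

Lemma colin_mul w g h : colin w (aff_mul g h) = colin (colin w g) h.
Proof. by rewrite /colin /=; congr pair; rewrite !mulrDl !mulrDr !mulrA addrACA. Qed.

Lemma lin_id u : lin (aff_id R) u = u.
Proof. by case: u => u1 u2; rewrite /lin /= !mul1r !mul0r addr0 add0r. Qed.

Lemma colin_id w : colin w (aff_id R) = w.
Proof. by case: w => w1 w2; rewrite /colin /= !mulr1 !mulr0 addr0 add0r. Qed.

Lemma vdot_lin w g u : vdot w (lin g u) = vdot (colin w g) u.
Proof. by rewrite /vdot /= !mulrDl !mulrDr !mulrA addrACA. Qed.

Lemma lin0 g : lin g 0 = 0.
Proof. by rewrite /lin /= !mulr0 addr0. Qed.

Lemma linD g u v : lin g (u + v) = lin g u + lin g v.
Proof. by rewrite /lin /=; congr pair; rewrite !mulrDr addrACA. Qed.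

Lemma lin_rscale g u l : lin g (rscale u l) = rscale (lin g u) l.
Proof. by rewrite /lin /rscale /=; congr pair; rewrite !mulrDl !mulrA. Qed.

Lemma rscaleBl u v l : rscale (u - v) l = rscale u l - rscale v l.
Proof. by rewrite /rscale /= !mulrBl. Qed.

Lemma rscaler0 u : rscale u 0 = 0.
Proof. by rewrite /rscale !mulr0. Qed.

Lemma rscale0r l : rscale 0 l = 0.
Proof. by rewrite /rscale !mul0r. Qed.

Lemma rscaleK u l : l != 0 -> rscale (rscale u l) l^-1 = u.
Proof. by case: u => u1 u2 l0; rewrite /rscale /= !mulrK ?qunitE. Qed.

Lemma rscale_eq0 u l : l != 0 -> rscale u l = 0 -> u = 0.
Proof. by move=> l0 ul0; rewrite -(rscaleK u l0) ul0 /rscale /= mul0r. Qed.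

Lemma vdot_rscale w u l : vdot w (rscale u l) = vdot w u * l.
Proof. by rewrite /vdot /= mulrDl !mulrA. Qed.

Lemma vdotBl w1 w2 u : vdot (w1 - w2) u = vdot w1 u - vdot w2 u.
Proof. by rewrite /vdot /= !mulrBl opprD addrACA. Qed.

Lemma vdotBr w u1 u2 : vdot w (u1 - u2) = vdot w u1 - vdot w u2.
Proof. by rewrite /vdot /= !mulrBr opprD addrACA. Qed.

Lemma vdot_disp w g u : vdot (colin w g - w) u = vdot w (lin g u - u).
Proof. by rewrite vdotBl vdotBr vdot_lin. Qed.

Lemma dependent_or_spanning_pivot k z : k.1 != 0 ->
  (exists a b, (a, b) != 0 :> V /\ rscale k a + rscale z b = 0) \/
  (forall y, exists a b, y = rscale k a + rscale z b).
Proof.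
case: k z => k1 k2 [z1 z2] /= k1_neq0; rewrite /rscale /= pair0.
(* [s] is the Schur complement of the pivot [k1] in the matrix with columns [k], [z]. *)
pose s := z2 - k2 * k1^-1 * z1.
have [s0|s_neq0] := eqVneq s 0.
  left; exists (- (k1^-1 * z1)), 1; split; first exact: pair_one_neq0.
  by rewrite pairD !mulr1 !mulrN mulVKr ?qunitE // addNr mulrA addrC -/s s0.
right=> -[y1 y2]; pose b := s^-1 * (y2 - k2 * k1^-1 * y1).
exists (k1^-1 * (y1 - z1 * b)), b; rewrite pairD mulVKr ?qunitE // subrK.
have sb : s * b = y2 - k2 * k1^-1 * y1 by rewrite /b mulVKr ?qunitE.
congr pair; rewrite -(subrK (k2 * k1^-1 * y1) y2) -sb /s.
by rewrite mulrBl !mulrBr !mulrA [LHS]addrC [RHS]addrAC addrA.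
Qed.

Lemma dependent_or_spanning k z :
  (exists a b, (a, b) != 0 :> V /\ rscale k a + rscale z b = 0) \/
  (forall y, exists a b, y = rscale k a + rscale z b).
Proof.
have [->|k_neq0] := eqVneq k 0.
  left; exists 1, 0; split; first exact: one_pair_neq0.
  by rewrite rscaler0 addr0 /rscale !mul0r.
have [|/negPn/eqP] := boolP (k.1 != 0); first exact: dependent_or_spanning_pivot.
case: k z k_neq0 => k1 k2 [z1 z2] /= k_neq0 k1_0; rewrite /rscale /= pair0.
have k2_neq0 : k2 != 0 by apply: contraNneq k_neq0 => k2_0; rewrite k1_0 k2_0.
have [->|z1_neq0] := eqVneq z1 0.
  left; exists (- (k2^-1 * z2)), 1; split; first exact: pair_one_neq0.
  by rewrite pairD k1_0 !mul0r !mulr1 add0r mulrN mulVKr ?qunitE // addNr.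
right=> -[y1 y2]; exists (k2^-1 * (y2 - z2 * (z1^-1 * y1))), (z1^-1 * y1).
by rewrite pairD k1_0 !mul0r add0r !mulVKr ?qunitE // subrK.
Qed.

Lemma rscaleA u a b : rscale (rscale u a) b = rscale u (a * b).
Proof. by rewrite /rscale /= !mulrA. Qed.

Lemma rscaleNr u l : rscale u (- l) = - rscale u l.
Proof. by rewrite /rscale !mulrN. Qed.

Lemma pair_comb (a b : Q) : (a, b) = rscale (1, 0) a + rscale (0, 1) b.
Proof. by rewrite /rscale /= !mul1r !mul0r pairD addr0 add0r. Qed.

Lemma lin_disp_comb g k z a b :
  lin g (rscale k a + rscale z b) - (rscale k a + rscale z b) =
  rscale (lin g k - k) a + rscale (lin g z - z) b.
Proof. by rewrite linD !lin_rscale !rscaleBl opprD addrACA. Qed.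

Lemma spanning_of_not_collinear k z : k != 0 -> (forall l, z != rscale k l) ->
  forall y, exists a b, y = rscale k a + rscale z b.
Proof.
move=> k_neq0 z_ncol; case: (dependent_or_spanning k z) => // -[a [b [ab_neq0 e]]].
have [b0|b_neq0] := eqVneq b 0.
  have a_neq0 : a != 0 by move: ab_neq0; rewrite b0 pair0 xpair_eqE eqxx andbT.
  by move: e; rewrite b0 rscaler0 addr0 => /(rscale_eq0 a_neq0) /eqP; rewrite (negPf k_neq0).
have zb : rscale z b = rscale k (- a) by apply/eqP; rewrite rscaleNr -addr_eq0 addrC e.
by move/eqP: (z_ncol (- a / b)); rewrite -(rscaleK z b_neq0) zb rscaleA.
Qed.

Lemma disp_collinear g k z : k != 0 -> lin g k = k -> lin g z != z ->
  forall y, exists mu, lin g y - y = rscale (lin g z - z) mu.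
Proof.
move=> k_neq0 gk gz y.
have z_ncol l : z != rscale k l by apply: contraNneq gz => ->; rewrite lin_rscale gk.
have [a [b ->]] := spanning_of_not_collinear k_neq0 z_ncol y.
by exists b; rewrite lin_disp_comb gk subrr rscale0r add0r.
Qed.

Lemma fixed_vector_collinear g k u : k != 0 -> lin g k = k -> lin g u = u ->
  (exists z, lin g z != z) -> exists l, u = rscale k l.
Proof.
move=> k_neq0 gk gu [z gz]; apply: NNPP => u_ncol.
have u_ncol' l : u != rscale k l by apply/eqP => ul; apply: u_ncol; exists l.
have [a [b ez]] := spanning_of_not_collinear k_neq0 u_ncol' z.
by move: gz; rewrite ez -subr_eq0 lin_disp_comb gk gu !subrr !rscale0r addr0 eqxx.
Qed.

Lemma annihilator x : exists w, w != 0 /\ vdot w x = 0.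
Proof.
case: x => x1 x2; have [x1_0|x1_neq0] := eqVneq x1 0.
  exists (1, 0); split; first exact: one_pair_neq0.
  by rewrite /vdot /= x1_0 mulr0 mul0r addr0.
exists (- (x2 * x1^-1), 1); split; first exact: pair_one_neq0.
by rewrite /vdot /= mulNr mulrVK ?qunitE // mul1r addNr.
Qed.

Lemma vdot_eq0 w : (forall u, vdot w u = 0) -> w = 0.
Proof.
case: w => w1 w2 w0; move: (w0 (1, 0)) (w0 (0, 1)); rewrite /vdot /=.
by rewrite !mulr1 !mulr0 addr0 add0r pair0 => -> ->.
Qed.

Lemma cofixed_covector g k z : k != 0 -> lin g k = k -> lin g z != z ->
  exists w, w != 0 /\ colin w g = w.
Proof.
move=> k_neq0 gk gz; have [w [w_neq0 wz]] := annihilator (lin g z - z).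
exists w; split=> //; apply/subr0_eq/vdot_eq0 => y; rewrite vdot_disp.
by have [mu ->] := disp_collinear k_neq0 gk gz y; rewrite vdot_rscale wz mul0r.
Qed.

Definition has_fixed_vector g := exists u, u != 0 /\ lin g u = u.

Lemma fixes_vector_or_covector A B v w : lin A v = v ->
  (forall u, lin A u = u -> exists l, u = rscale v l) -> colin w A = w ->
  has_fixed_vector B -> has_fixed_vector (aff_mul A B) ->
  lin B v = v \/ colin w B = w.
Proof.
move=> Av A_line wA [k [k_neq0 Bk]] [u [u_neq0]]; rewrite lin_mul => ABu.
have [|wB_neq] := eqVneq (colin w B) w; [by right | left].
have wBu : vdot w (lin B u) = vdot w u by rewrite -{2}ABu [RHS]vdot_lin wA.
have Bu : lin B u = u.
  apply/eqP; apply: contraNT wB_neq => Bu_neq; apply/eqP/subr0_eq/vdot_eq0 => y.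
  rewrite vdot_disp; have [mu ->] := disp_collinear k_neq0 Bk Bu_neq y.
  by rewrite vdot_rscale vdotBr wBu subrr mul0r.
have [l ul] : exists l, u = rscale v l by apply: A_line; rewrite -{1}Bu.
have l_neq0 : l != 0 by apply: contraNneq u_neq0 => l0; rewrite ul l0 rscaler0.
by rewrite -(rscaleK (lin B v) l_neq0) -lin_rscale -ul Bu ul rscaleK.
Qed.

Lemma has_fixed_vector_or_fixed_point g :
  has_fixed_vector g \/ exists p, aff_act g p = p.
Proof.
have [[a [b [ab_neq0 e]]]|span] :=
  dependent_or_spanning (lin g (1, 0) - (1, 0)) (lin g (0, 1) - (0, 1)).
  by left; exists (a, b); split=> //; apply/subr0_eq; rewrite pair_comb lin_disp_comb.
right; have [a [b e]] := span (- (ar g, as_ g)).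
rewrite -lin_disp_comb -pair_comb in e.
by exists (a, b); rewrite aff_actE -[(ar g, as_ g)]opprK e opprB addrC subrK.
Qed.

Lemma free_has_fixed_vector Gamma g : acts_freely Gamma -> Gamma g ->
  has_fixed_vector g.
Proof.
move=> free Gg; have [//|[p gp]] := has_fixed_vector_or_fixed_point g.
by rewrite (free g p Gg gp); exists (1, 0); split; [exact: one_pair_neq0 | exact: lin_id].
Qed.

Lemma aff_inverse_sym g h : aff_inverse g h -> aff_inverse h g.
Proof. by case. Qed.

Lemma lin_inverseK g h : aff_inverse g h -> cancel (lin h) (lin g).
Proof. by case=> gh _ u; rewrite -lin_mul gh lin_id. Qed.

Lemma lin_inj g h : aff_inverse g h -> injective (lin g).
Proof. by move/aff_inverse_sym/lin_inverseK/can_inj. Qed.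

Lemma colin_inverseK g h : aff_inverse g h -> cancel (colin^~ g) (colin^~ h).
Proof. by case=> gh _ w; rewrite -colin_mul gh colin_id. Qed.

Lemma colin_inj g h : aff_inverse g h -> injective (colin^~ g).
Proof. by move/colin_inverseK/can_inj. Qed.

Lemma lin_conj_inj P Pi g g' : aff_inverse P Pi -> aff_inverse g g' ->
  injective (lin (aff_mul (aff_mul P g) Pi)).
Proof.
move=> PPi gg' u v; rewrite !lin_mul.
by move/(lin_inj PPi)/(lin_inj gg')/(lin_inj (aff_inverse_sym PPi)).
Qed.

Lemma colin_conj_inj P Pi g g' : aff_inverse P Pi -> aff_inverse g g' ->
  injective (colin^~ (aff_mul (aff_mul P g) Pi)).
Proof.
move=> PPi gg' u v; rewrite !colin_mul.
by move/(colin_inj (aff_inverse_sym PPi))/(colin_inj gg')/(colin_inj PPi).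
Qed.

Lemma in_G2_of_fixed_e1 c : injective (lin c) -> lin c (1, 0) = (1, 0) -> in_G2 c.
Proof.
move=> inj; rewrite /lin /= !mulr1 !mulr0 !addr0 => -[a1 c0].
rewrite /in_G2 qzeroE qoneE; split=> //; split=> // d0.
have /negP[] := pair_one_neq0 (- ab c); apply/eqP/inj.
by rewrite lin0 /lin /= a1 c0 d0 mul1r mulr1 addNr !mul0r addr0.
Qed.

Lemma in_G1_of_cofixed_e2 c : injective (colin^~ c) ->
  colin (0, 1) c = (0, 1) -> in_G1 c.
Proof.
move=> inj; rewrite /colin /= !mul1r !mul0r !add0r => -[c0 d1].
rewrite /in_G1 qzeroE qoneE; split; last by [].
move=> a0; have /negP[] := one_pair_neq0 (- ab c); apply/eqP/inj.
by rewrite /colin /= a0 c0 d1 !mulr0 !mul0r mul1r mulr1 !addr0 addrN.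
Qed.

Local Ltac inverse_entries :=
  split; rewrite !aff_mulE aff_idE /=; congr Aff;
  by rewrite ?(mul0r, mulr0, mul1r, mulr1, add0r, addr0, mulNr, mulrN,
               mulVr, mulrV, mulrVK, mulVKr, addNr, addrN).

Lemma frame_e1 v : v != 0 -> exists P Pi, aff_inverse P Pi /\ lin Pi (1, 0) = v.
Proof.
case: v => v1 v2 v_neq0; have [v1_0|] := eqVneq v1 0.
  have v2U : v2 \is a GRing.unit.
    by rewrite qunitE; apply: contraNneq v_neq0 => v2_0; rewrite v1_0 v2_0.
  exists (Aff 0 v2^-1 1 0 0 0), (Aff 0 1 v2 0 0 0); split; first by inverse_entries.
  by rewrite /lin /= v1_0 !mulr1 !mulr0 !addr0.
rewrite -qunitE => v1U.
exists (Aff v1^-1 0 (- (v2 * v1^-1)) 1 0 0), (Aff v1 0 v2 1 0 0).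
by split; [inverse_entries | rewrite /lin /= !mulr1 !mulr0 !addr0].
Qed.

Lemma coframe_e2 w : w != 0 -> exists P Pi, aff_inverse P Pi /\ colin (0, 1) P = w.
Proof.
case: w => w1 w2 w_neq0; have [w2_0|] := eqVneq w2 0.
  have w1U : w1 \is a GRing.unit.
    by rewrite qunitE; apply: contraNneq w_neq0 => w1_0; rewrite w1_0 w2_0.
  exists (Aff 0 1 w1 0 0 0), (Aff 0 w1^-1 1 0 0 0); split; first by inverse_entries.
  by rewrite /colin /= w2_0 !mul1r !mul0r !add0r.
rewrite -qunitE => w2U.
exists (Aff 1 0 w1 w2 0 0), (Aff 1 0 (- (w2^-1 * w1)) w2^-1 0 0).
by split; [inverse_entries | rewrite /colin /= !mul1r !mul0r !add0r].
Qed.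

Lemma conj_into_G2 Gamma v : is_subgroup Gamma -> v != 0 ->
  (forall g, Gamma g -> lin g v = v) ->
  exists h hinv, aff_inverse h hinv /\
    forall g, Gamma g -> in_G2 (aff_mul (aff_mul h g) hinv).
Proof.
move=> [_ [_ Ginv]] v_neq0 Gv; have [P [Pi [PPi Pi_e1]]] := frame_e1 v_neq0.
exists P, Pi; split=> // g Gg; have [g' [_ gg']] := Ginv g Gg.
apply: in_G2_of_fixed_e1; first exact: lin_conj_inj PPi gg'.
by rewrite !lin_mul Pi_e1 Gv // -Pi_e1 (lin_inverseK PPi).
Qed.

Lemma conj_into_G1 Gamma w : is_subgroup Gamma -> w != 0 ->
  (forall g, Gamma g -> colin w g = w) ->
  exists h hinv, aff_inverse h hinv /\
    forall g, Gamma g -> in_G1 (aff_mul (aff_mul h g) hinv).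
Proof.
move=> [_ [_ Ginv]] w_neq0 Gw; have [P [Pi [PPi P_e2]]] := coframe_e2 w_neq0.
exists P, Pi; split=> // g Gg; have [g' [_ gg']] := Ginv g Gg.
apply: in_G1_of_cofixed_e2; first exact: colin_conj_inj PPi gg'.
by rewrite !colin_mul P_e2 Gw // -P_e2 (colin_inverseK PPi).
Qed.

Lemma free_stabilizes_vector_or_covector Gamma :
  is_subgroup Gamma -> acts_freely Gamma ->
  (exists v, v != 0 /\ forall g, Gamma g -> lin g v = v) \/
  (exists w, w != 0 /\ forall g, Gamma g -> colin w g = w).
Proof.
move=> [_ [Gmul _]] free; have fixv g := @free_has_fixed_vector Gamma g free.
have [[g0 [Gg0 moved]]|all_trivial] :=
  classic (exists g0, Gamma g0 /\ exists z, lin g0 z != z); last first.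
  left; exists (1, 0); split=> [|g Gg]; first exact: one_pair_neq0.
  by apply: NNPP => moved; apply: all_trivial; exists g; split=> //; exists (1, 0); apply/eqP.
have [v [v_neq0 g0v]] := fixv g0 Gg0.
have [w [w_neq0 wg0]] : exists w, w != 0 /\ colin w g0 = w.
  by have [z g0z] := moved; apply: cofixed_covector v_neq0 g0v g0z.
have line u : lin g0 u = u -> exists l, u = rscale v l.
  by move=> g0u; apply: fixed_vector_collinear v_neq0 g0v g0u moved.
have cover X : Gamma X -> lin X v = v \/ colin w X = w.
  by move=> GX; exact: fixes_vector_or_covector g0v line wg0 (fixv _ GX) (fixv _ (Gmul _ _ Gg0 GX)).
have fixv_cancel g h : lin h v = v -> lin (aff_mul g h) v = v -> lin g v = v.
  by move=> hv; rewrite lin_mul hv.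
have fixw_cancel g h : colin w g = w -> colin w (aff_mul g h) = w -> colin w h = w.
  by move=> wg; rewrite colin_mul wg.
by case: (stabilizer_cover Gmul fixv_cancel fixw_cancel cover) => [Gv|Gw];
  [left; exists v | right; exists w].
Qed.

End QuaternionPlane.

Theorem mainTheorem7 (R : realType) (Gamma : aff R -> Prop)
  (HG : is_subgroup Gamma) (Hfree : acts_freely Gamma) :
  exists h hinv : aff R, aff_inverse h hinv /\
    ((forall g, Gamma g -> in_G1 (aff_mul (aff_mul h g) hinv)) \/
     (forall g, Gamma g -> in_G2 (aff_mul (aff_mul h g) hinv))).
Proof.
have [[v [v_neq0 Gv]]|[w [w_neq0 Gw]]] := free_stabilizes_vector_or_covector HG Hfree.
  have [h [hinv [hhinv G2]]] := conj_into_G2 HG v_neq0 Gv.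
  by exists h, hinv; split=> //; right.
have [h [hinv [hhinv G1]]] := conj_into_G1 HG w_neq0 Gw.
by exists h, hinv; split=> //; left.
Qed.
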